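(* Let $S$ be a memory system satisfying the Causality and Data Independence assumptions. For all $n,m\ge1$: every trace of $S(n,m)$ is sequentially consistent if and only if there is a witness $\Omega$ for $S(n,m)$ such that the graph $G(\Omega)(\tau)$ is acyclic for every unambiguous trace $\tau$ of $S(n,m)$.
   Context: Notation: $\mathbb{N}_n=\{1,\dots,n\}$, $\mathbb{W}_n=\{0,\dots,n\}$, $\mathbb{W}=\{0,1,2,\dots\}$. Memory events $E(n,m,v)=\{R,W\}\times\mathbb{N}_n\times\mathbb{N}_m\times\mathbb{W}_v$; for $e=\langle a,b,c,d\rangle$, $op(e)=a$, $proc(e)=b$, $loc(e)=c$, $data(e)=d$; $0$ models the initial value of every location. A memory system is a family $S=(S(n,m,v))_{n,m,v\ge1}$, $S(n,m,v)$ a regular set of finite runs over an alphabet $E^a(n,m,v)\supseteq E(n,m,v)$ (other letters are internal events); $S(n,m)=\bigcup_{v\ge1}S(n,m,v)$. The trace of a run is its subsequence of memory events; traces of $S(n,m,v)$ (resp. $S(n,m)$) are traces of its runs. For a sequence $\tau$ of memory events with positions $1,\dots,|\tau|$: $P(\tau,i)=\{k: proc(\tau(k))=i\}$, $L(\tau,j)=\{k: loc(\tau(k))=j\}$, $L^w(\tau,j)=\{k\in L(\tau,j): op(\tau(k))=W\}$, $L^r(\tau,j)=\{k\in L(\tau,j): op(\tau(k))=R\}$. A trace $\tau$ is unambiguous if for every location $j$ and $x\in L^w(\tau,j)$, $data(\tau(x))\ne0$ and $data(\tau(x))\ne data(\tau(y))$ for all $y\in L^w(\tau,j)\setminus\{x\}$.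 Causality assumption: for all $n,m,v\ge1$, every trace $\tau$ of $S(n,m,v)$, every location $j$ and every $x\in L^r(\tau,j)$, either $data(\tau(x))=0$ or there is $y\in L^w(\tau,j)$ with $data(\tau(x))=data(\tau(y))$. Data Independence assumption: a renaming function is $\lambda:\mathbb{N}_m\times\mathbb{W}\to\mathbb{W}$ with $\lambda(j,0)=0$ for all $j$, inducing $\lambda^d(\langle a,b,c,d\rangle)=\langle a,b,c,\lambda(c,d)\rangle$ letterwise on sequences; for all $n,m,v\ge1$ and $\tau\in E(n,m,v)^*$, $\tau$ is a trace of $S(n,m,v)$ iff there are an unambiguous trace $\tau'$ of $S(n,m)$ and a renaming function $\lambda:\mathbb{N}_m\times\mathbb{W}\to\mathbb{W}_v$ with $\tau=\lambda^d(\tau')$. Sequential consistency: $\tau$ is serial if for every position $u$, with $upto(\tau,u)=\{k\le u: op(\tau(k))=W,\ loc(\tau(k))=loc(\tau(u))\}$, $data(\tau(u))=0$ when $upto(\tau,u)=\emptyset$ and $data(\tau(u))=data(\tau(\max upto(\tau,u)))$ otherwise. $M(\tau,i)=\{\langle u,v\rangle: u,v\in P(\tau,i), u<v\}$. $\tau$ is sequentially consistent if some permutation $f$ of $\mathbb{N}_{|\tau|}$ satisfies (C1) $\langle u,v\rangle\in M(\tau,i)$ for some $i$ implies $f(u)<f(v)$, and (C2) $\tau_{f^{-1}(1)}\cdots\tau_{f^{-1}(|\tau|)}$ is serial. A witness $\Omega$ for $S(n,m)$ assigns to every trace $\tau$ of $S(n,m)$ and location $j$ a strict total order $\Omega(\tau,j)$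 on $L^w(\tau,j)$. For unambiguous $\tau$, $\Omega^e(\tau,j)\subseteq L(\tau,j)^2$: $\langle x,y\rangle\in\Omega^e(\tau,j)$ iff (1) $data(\tau(x))=data(\tau(y))$, $op(\tau(x))=W$, $op(\tau(y))=R$; or (2) $data(\tau(x))=0$ and $data(\tau(y))\ne0$; or (3) there are $a,b\in L^w(\tau,j)$ with $\langle a,b\rangle\in\Omega(\tau,j)$, $data(\tau(a))=data(\tau(x))$, $data(\tau(b))=data(\tau(y))$. The constraint graph $G(\Omega)(\tau)$ is the directed graph with vertex set $\{1,\dots,|\tau|\}$ and edge set $\bigcup_{1\le i\le n}M(\tau,i)\cup\bigcup_{1\le j\le m}\Omega^e(\tau,j)$. *)

From mathcomp Require Import all_boot all_fingroup.
From Stdlib Require List.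
Set Implicit Arguments. Unset Strict Implicit. Unset Printing Implicit Defensive.

Inductive opkind := OpR | OpW.

Record event := Ev { op : opkind; proc : nat; loc : nat; data : nat }.

Definition ev0 : event := Ev OpR 0 0 0.

Definition inE (n m v : nat) (e : event) : Prop :=
  1 <= proc e <= n /\ 1 <= loc e <= m /\ data e <= v.

Inductive letter (I : Type) := Mem of event | Int of I.
Arguments Mem {I} _.
Arguments Int {I} _.

Definition trace_of_run (I : Type) (r : seq (letter I)) : seq event :=
  pmap (fun l => match l with Mem e => Some e | Int _ => None end) r.

(** Regular language over the finite alphabet E^a = E(n,m,v) ∪ A
    (A a finite list of internal events), accepted by a DFA. *)
Definition regular_over (I : Type) (n m v : nat) (L : seq (letter I) -> Prop) : Prop :=
  exists (A : seq I) (Q : finType) (q0 : Q) (delta : Q -> letter I -> Q) (F : pred Q),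
    forall w : seq (letter I),
      L w <->
      ((forall l, List.In l w ->
          match l with Mem e => inE n m v e | Int a => List.In a A end)
       /\ F (foldl delta q0 w)).

Definition memory_system (I : Type) (S : nat -> nat -> nat -> seq (letter I) -> Prop) : Prop :=
  forall n m v, 1 <= n -> 1 <= m -> 1 <= v -> regular_over n m v (S n m v).

Definition trace_nmv (I : Type) (S : nat -> nat -> nat -> seq (letter I) -> Prop)
  (n m v : nat) (tau : seq event) : Prop :=
  exists r, S n m v r /\ tau = trace_of_run r.

Definition trace_nm (I : Type) (S : nat -> nat -> nat -> seq (letter I) -> Prop)
  (n m : nat) (tau : seq event) : Prop :=
  exists v, 1 <= v /\ trace_nmv S n m v tau.

(** Positions are 0-based: 0 .. size tau - 1. *)
Notation at_ tau k := (nth ev0 tau k).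

Definition inP (tau : seq event) (i x : nat) : Prop :=
  x < size tau /\ proc (at_ tau x) = i.
Definition inL (tau : seq event) (j x : nat) : Prop :=
  x < size tau /\ loc (at_ tau x) = j.
Definition inLw (tau : seq event) (j x : nat) : Prop :=
  inL tau j x /\ op (at_ tau x) = OpW.
Definition inLr (tau : seq event) (j x : nat) : Prop :=
  inL tau j x /\ op (at_ tau x) = OpR.

Definition unambiguous (tau : seq event) : Prop :=
  forall j x, inLw tau j x ->
    data (at_ tau x) <> 0 /\
    (forall y, inLw tau j y -> y <> x -> data (at_ tau x) <> data (at_ tau y)).

Definition causality (I : Type) (S : nat -> nat -> nat -> seq (letter I) -> Prop) : Prop :=
  forall n m v, 1 <= n -> 1 <= m -> 1 <= v ->
  forall tau, trace_nmv S n m v tau ->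
  forall j x, inLr tau j x ->
    data (at_ tau x) = 0 \/
    exists y, inLw tau j y /\ data (at_ tau x) = data (at_ tau y).

(** Renaming functions N_m x W -> W_v (given as total functions nat -> nat -> nat;
    only values on locations 1..m matter). *)
Definition renaming (v : nat) (lam : nat -> nat -> nat) : Prop :=
  (forall j, lam j 0 = 0) /\ (forall j d, lam j d <= v).

Definition rename_ev (lam : nat -> nat -> nat) (e : event) : event :=
  Ev (op e) (proc e) (loc e) (lam (loc e) (data e)).

Definition data_independence (I : Type) (S : nat -> nat -> nat -> seq (letter I) -> Prop) : Prop :=
  forall n m v, 1 <= n -> 1 <= m -> 1 <= v ->
  forall tau : seq event, (forall e, List.In e tau -> inE n m v e) ->
    (trace_nmv S n m v tau <->
     exists (tau' : seq event) (lam : nat -> nat -> nat),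
       trace_nm S n m tau' /\ unambiguous tau' /\ renaming v lam /\
       tau = map (rename_ev lam) tau').

Definition serial (tau : seq event) : Prop :=
  forall u, u < size tau ->
    ((forall k, k <= u -> ~ inLw tau (loc (at_ tau u)) k) /\ data (at_ tau u) = 0)
    \/
    (exists k, k <= u /\ inLw tau (loc (at_ tau u)) k /\
       (forall k', k < k' <= u -> ~ inLw tau (loc (at_ tau u)) k') /\
       data (at_ tau u) = data (at_ tau k)).

Definition seq_consistent (tau : seq event) : Prop :=
  exists f : {perm 'I_(size tau)},
    (forall u w : 'I_(size tau), u < w ->
        proc (at_ tau u) = proc (at_ tau w) -> f u < f w) /\
    serial [seq at_ tau ((f^-1)%g k) | k : 'I_(size tau)].

Definition strict_total_order_on (A : nat -> Prop) (R : nat -> nat -> Prop) : Prop :=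
  (forall x y, R x y -> A x /\ A y) /\
  (forall x, ~ R x x) /\
  (forall x y z, R x y -> R y z -> R x z) /\
  (forall x y, A x -> A y -> x <> y -> R x y \/ R y x).

Definition witness (I : Type) (S : nat -> nat -> nat -> seq (letter I) -> Prop)
  (n m : nat) (Omega : seq event -> nat -> nat -> nat -> Prop) : Prop :=
  forall tau, trace_nm S n m tau ->
  forall j, 1 <= j <= m -> strict_total_order_on (inLw tau j) (Omega tau j).

Definition Omega_e (Omega : seq event -> nat -> nat -> nat -> Prop)
  (tau : seq event) (j x y : nat) : Prop :=
  inL tau j x /\ inL tau j y /\
  ( (data (at_ tau x) = data (at_ tau y) /\ op (at_ tau x) = OpW /\ op (at_ tau y) = OpR)
  \/ (data (at_ tau x) = 0 /\ data (at_ tau y) <> 0)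
  \/ (exists a b, inLw tau j a /\ inLw tau j b /\ Omega tau j a b /\
        data (at_ tau a) = data (at_ tau x) /\ data (at_ tau b) = data (at_ tau y)) ).

Definition G_edge (n m : nat) (Omega : seq event -> nat -> nat -> nat -> Prop)
  (tau : seq event) (x y : nat) : Prop :=
  (exists i, 1 <= i <= n /\ inP tau i x /\ inP tau i y /\ x < y)
  \/ (exists j, 1 <= j <= m /\ Omega_e Omega tau j x y).

Definition acyclic (E : nat -> nat -> Prop) : Prop :=
  ~ exists (k : nat) (p : nat -> nat),
      0 < k /\ p 0 = p k /\ (forall i, i < k -> E (p i) (p i.+1)).

(* Sequential consistency of a trace amounts to a ranking of its positions
   ([sc_schedule]) that respects program order and under which every event reads
   the value of the latest write to its location ranked before it.  If every trace
   has such a ranking, ordering the writes of each location by rank is a witness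
   whose constraint graphs only have rank-increasing edges, hence are acyclic.
   Conversely, a topological ranking of an acyclic constraint graph of an
   unambiguous trace is such a schedule: by causality and unambiguity a read
   determines the unique write it takes its value from, and totality of the
   witness puts every other write to that location before this write or after
   the read.  Data independence presents every trace as a renaming of an
   unambiguous one, and renaming preserves schedules. *)

From Pilot Require Import Defs.
From mathcomp Require Import all_boot all_fingroup.
From mathcomp Require Import zify.
From Stdlib Require Import Relation_Operators Operators_Properties ClassicalEpsilon.
Set Implicit Arguments. Unset Strict Implicit. Unset Printing Implicit Defensive.

Definition decide (P : Prop) : bool :=
  if excluded_middle_informative P then true else false.

Lemma decideP (P : Prop) : reflect P (decide P).
Proof. by rewrite /decide; case: excluded_middle_informative => H; constructor. Qed.

Section Acyclic.

Variable E : nat -> nat -> Prop.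

Lemma acyclic_of_rank (r : nat -> nat) :
  (forall x y, E x y -> r x < r y) -> acyclic E.
Proof.
move=> r_mono [k [p [k_gt0 [p_closed p_walk]]]].
have drift i : i <= k -> r (p 0) + i <= r (p i).
  elim: i => [|i IH] i_le; first by rewrite addn0.
  rewrite addnS; apply: leq_trans (r_mono _ _ (p_walk i i_le)).
  by rewrite ltnS IH // ltnW.
by have := drift k (leqnn k); rewrite -p_closed; lia.
Qed.

Lemma clos_trans_walk x y : clos_trans nat E x y ->
  exists k p, [/\ 0 < k, p 0 = x, p k = y & forall i, i < k -> E (p i) (p i.+1)].
Proof.
move/clos_trans_tn1_iff; elim=> [z Exz | z w Ezw _ [k [p [k_gt0 p0 pk p_walk]]]].
  by exists 1, (fun i => if i is 0 then x else z); split=> // -[].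
exists k.+1, (fun i => if i <= k then p i else w); split=> //.
  by rewrite ltnn.
move=> i; rewrite ltnS; case: ltngtP => // [i_lt _ | -> _]; [exact: p_walk | by rewrite pk].
Qed.

Lemma acyclic_clos_trans_irrefl x : acyclic E -> ~ clos_trans nat E x x.
Proof.
move=> E_acyc /clos_trans_walk [k [p [k_gt0 p0 pk p_walk]]]; apply: E_acyc.
by exists k, p; rewrite p0 pk.
Qed.

Lemma acyclic_topological_rank N :
  (forall x y, E x y -> x < N /\ y < N) -> acyclic E ->
  exists r : nat -> nat,
    (forall x y, x < N -> y < N -> r x = r y -> x = y) /\
    (forall x y, E x y -> r x < r y).
Proof.
move=> E_dom E_acyc.
pose ancestors x := [set z : 'I_N | decide (clos_trans nat E z x)].
(* An edge x -> y makes the ancestors of x a proper subset of those of y;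
   the summand x breaks ties. *)
exists (fun x => #|ancestors x| * N + x); split.
  move=> x y x_lt y_lt /(congr1 (modn^~ N)).
  by rewrite !modnMDl !modn_small.
move=> x y Exy; have [x_lt y_lt] := E_dom _ _ Exy.
suff : #|ancestors x| < #|ancestors y| by nia.
apply: proper_card; apply/properP; split.
  apply/subsetP => z; rewrite !inE => /decideP zx.
  by apply/decideP; apply: t_trans zx (t_step _ _ _ _ Exy).
exists (Ordinal x_lt); rewrite !inE /=; apply/decideP.
  exact: t_step.
exact: acyclic_clos_trans_irrefl.
Qed.

End Acyclic.

Lemma exists_rank_perm N (r : 'I_N -> nat) : injective r ->
  exists f : {perm 'I_N}, forall a b, (f a < f b) = (r a < r b).
Proof.
move=> r_inj; pose below a := [set b | r b < r a].
have below_mono a b : r a < r b -> #|below a| < #|below b|.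
  move=> ab; apply: proper_card; apply/properP; split.
    by apply/subsetP => z; rewrite !inE => za; apply: ltn_trans ab.
  by exists a; rewrite !inE ?ltnn.
have below_lt a : #|below a| < N.
  rewrite -[X in _ < X]card_ord -cardsT; apply: proper_card; apply/properP.
  by split; [exact: subsetT | exists a; rewrite // inE ltnn].
pose F a := Ordinal (below_lt a).
have F_mono a b : (F a < F b) = (r a < r b).
  apply/idP/idP => [|/below_mono //].
  case: (ltngtP (r a) (r b)) => [//|/below_mono /= ba ab|/r_inj ->].
    by have := ltn_trans ab ba; rewrite ltnn.
  by rewrite ltnn.
have F_inj : injective F.
  move=> a b /(congr1 val) /= Fab.
  by case: (ltngtP (r a) (r b)) => [||/r_inj //]; rewrite -F_mono /= Fab ltnn.
by exists (perm F_inj) => a b; rewrite !permE.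
Qed.

(* Listing the events of [tau] by increasing [r] yields a serial sequence. *)
Definition serial_by (tau : seq event) (r : nat -> nat) : Prop :=
  forall u, u < size tau ->
    ((forall k, inLw tau (loc (at_ tau u)) k -> r u < r k) /\ data (at_ tau u) = 0) \/
    (exists k, [/\ inLw tau (loc (at_ tau u)) k, r k <= r u,
       forall k', inLw tau (loc (at_ tau u)) k' -> ~~ (r k < r k' <= r u)
       & data (at_ tau u) = data (at_ tau k)]).

Definition sc_schedule (tau : seq event) (r : nat -> nat) : Prop :=
  [/\ forall x y, x < size tau -> y < size tau -> r x = r y -> x = y,
      forall u w, u < w -> w < size tau -> proc (at_ tau u) = proc (at_ tau w) -> r u < r w
    & serial_by tau r].

Lemma inLw_lt tau j k : inLw tau j k -> k < size tau.
Proof. by case=> -[]. Qed.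

Lemma serialE s : serial s <-> serial_by s id.
Proof.
split=> ser u u_lt.
  case: (ser u u_lt) => [[no_w d0] | [k [k_le [k_w [k_last dk]]]]].
    by left; split=> // k k_w; rewrite ltnNge; apply/negP => /no_w.
  by right; exists k; split=> // k' k'_w; apply/negP => /k_last.
case: (ser u u_lt) => [[after d0] | [k [k_w k_le k_last dk]]].
  by left; split=> // k k_le k_w; have := after k k_w; rewrite ltnNge k_le.
right; exists k; split=> //; split=> //; split=> // k' k'_btw k'_w.
by have := k_last k' k'_w; rewrite k'_btw.
Qed.

Lemma serial_by_order_invariant s r r' :
  (forall a b, a < size s -> b < size s -> (r' a < r' b) = (r a < r b)) ->
  serial_by s r -> serial_by s r'.
Proof.
move=> r'r ser u u_lt.
have r'r_le a b : a < size s -> b < size s -> (r' a <= r' b) = (r a <= r b).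
  by move=> a_lt b_lt; rewrite leqNgt [RHS]leqNgt r'r.
case: (ser u u_lt) => [[after d0] | [k [k_w k_le k_last dk]]].
  by left; split=> // k k_w; rewrite r'r ?(inLw_lt k_w) //; apply: after.
have k_lt := inLw_lt k_w.
right; exists k; split; rewrite ?r'r_le // => k' k'_w.
by rewrite r'r ?r'r_le ?(inLw_lt k'_w) //; apply: k_last.
Qed.

Lemma serial_by_relabel s t (h : nat -> nat) r :
  (forall p, p < size t -> h p < size s /\ at_ t p = at_ s (h p)) ->
  (forall k, k < size s -> exists2 p, p < size t & h p = k) ->
  serial_by s r -> serial_by t (r \o h).
Proof.
move=> h_at h_onto ser p p_lt; have [hp_lt tp] := h_at p p_lt.
have inLw_h j k : k < size t -> inLw t j k <-> inLw s j (h k).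
  by move=> k_lt; have [hk_lt tk] := h_at k k_lt; rewrite /inLw /inL tk hk_lt k_lt.
rewrite tp /=; case: (ser _ hp_lt) => [[after d0] | [k [k_w k_le k_last dk]]].
  by left; split=> // k k_w; apply/after/(inLw_h _ _ (inLw_lt k_w)).
have [q q_lt hqk] := h_onto k (inLw_lt k_w); subst k.
right; exists q; split=> //; first exact/(inLw_h _ _ q_lt).
  by move=> k' k'_w; apply/k_last/(inLw_h _ _ (inLw_lt k'_w)).
by have [_ ->] := h_at q q_lt.
Qed.

Definition perm_nat N (f : {perm 'I_N}) (u : nat) : nat :=
  if insub u is Some o then val (f o) else u.

Lemma perm_natE N (f : {perm 'I_N}) (o : 'I_N) : perm_nat f o = f o.
Proof. by rewrite /perm_nat valK. Qed.

Lemma perm_nat_ord N (f : {perm 'I_N}) u (u_lt : u < N) : perm_nat f u = f (Ordinal u_lt).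
Proof. exact: (perm_natE f (Ordinal u_lt)). Qed.

Lemma perm_nat_lt N (f : {perm 'I_N}) u : u < N -> perm_nat f u < N.
Proof. by move=> u_lt; rewrite (perm_nat_ord f u_lt). Qed.

Lemma perm_natK N (f : {perm 'I_N}) u : u < N -> perm_nat f^-1 (perm_nat f u) = u.
Proof. by move=> u_lt; rewrite (perm_nat_ord f u_lt) perm_natE permK. Qed.

Lemma perm_natKV N (f : {perm 'I_N}) u : u < N -> perm_nat f (perm_nat f^-1 u) = u.
Proof. by move=> u_lt; rewrite (perm_nat_ord (f^-1) u_lt) perm_natE permKV. Qed.

Lemma serial_permuted tau (f : {perm 'I_(size tau)}) :
  serial [seq at_ tau ((f^-1)%g k) | k : 'I_(size tau)] <-> serial_by tau (perm_nat f).
Proof.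
set sigma := [seq _ | _ : _]; set N := size tau.
have size_sigma : size sigma = N by rewrite size_map size_enum_ord.
have at_sigma p : p < N -> at_ sigma p = at_ tau (perm_nat f^-1 p).
  move=> p_lt; rewrite (nth_map (Ordinal p_lt)) ?size_enum_ord // (perm_nat_ord _ p_lt).
  by have -> := nth_ord_enum (Ordinal p_lt) (Ordinal p_lt).
split=> [/serialE ser | ser].
  apply: (serial_by_relabel (s := sigma) _ _ ser) => [u u_lt | k].
    by rewrite size_sigma at_sigma ?perm_natK ?perm_nat_lt.
  rewrite size_sigma => k_lt; exists (perm_nat f^-1 k); first exact: perm_nat_lt.
  exact: perm_natKV.
apply/serialE/(serial_by_order_invariant (r := perm_nat f \o perm_nat f^-1)).
  by move=> a b; rewrite size_sigma => a_lt b_lt /=; rewrite !perm_natKV.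
apply: serial_by_relabel ser => [p | u]; rewrite size_sigma => lt_N.
  by rewrite at_sigma ?perm_nat_lt.
by exists (perm_nat f u); rewrite ?perm_nat_lt ?perm_natK.
Qed.

Lemma seq_consistentP tau : seq_consistent tau <-> exists r, sc_schedule tau r.
Proof.
split=> [[f [f_po f_ser]] | [r [r_inj r_po r_ser]]].
  exists (perm_nat f); split; last exact/serial_permuted.
    move=> x y x_lt y_lt.
    rewrite (perm_nat_ord f x_lt) (perm_nat_ord f y_lt).
    by move=> /val_inj /perm_inj /(congr1 val).
  move=> u w uw w_lt; have u_lt := ltn_trans uw w_lt.
  rewrite (perm_nat_ord f u_lt) (perm_nat_ord f w_lt).
  exact: (f_po (Ordinal u_lt) (Ordinal w_lt)).
have r_ord_inj : injective (fun o : 'I_(size tau) => r o).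
  by move=> a b /r_inj ab; apply/val_inj/ab.
have [f f_mono] := exists_rank_perm r_ord_inj.
have f_r a b : a < size tau -> b < size tau -> (perm_nat f a < perm_nat f b) = (r a < r b).
  by move=> a_lt b_lt; rewrite (perm_nat_ord f a_lt) (perm_nat_ord f b_lt) f_mono.
exists f; split=> [u w uw po | ]; first by rewrite -!perm_natE f_r //; apply: r_po.
exact/serial_permuted/(serial_by_order_invariant f_r).
Qed.

Lemma inLw_rename lam s j k : inLw (map (rename_ev lam) s) j k <-> inLw s j k.
Proof.
rewrite /inLw /inL size_map; split=> -[[k_lt kj] kw]; last by rewrite (nth_map ev0).
by rewrite (nth_map ev0) in kj kw.
Qed.

Lemma sc_schedule_rename lam s r : (forall j, lam j 0 = 0) ->
  sc_schedule s r -> sc_schedule (map (rename_ev lam) s) r.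
Proof.
move=> lam0 [r_inj r_po r_ser]; split; rewrite ?size_map //.
  move=> u w uw w_lt; rewrite !(nth_map ev0) ?(ltn_trans uw) //=; exact: r_po.
move=> u; rewrite size_map => u_lt; rewrite (nth_map ev0) //=.
case: (r_ser u u_lt) => [[after du0] | [k [k_w k_le k_last dk]]].
  by left; rewrite du0 lam0; split=> // k /inLw_rename; apply: after.
right; exists k; split=> //; first exact/inLw_rename.
  by move=> k' /inLw_rename; apply: k_last.
by rewrite (nth_map ev0 _ _ (inLw_lt k_w)) /= dk; case: k_w => -[_ ->].
Qed.

Section UnambiguousSchedule.

Variables (tau : seq event) (r : nat -> nat).
Hypotheses (tau_unamb : unambiguous tau) (r_sched : sc_schedule tau r).

Lemma unambiguous_write_eq j x y : inLw tau j x -> inLw tau j y ->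
  data (at_ tau x) = data (at_ tau y) -> x = y.
Proof.
move=> x_w y_w dxy; apply/eqP; apply: contraT => /eqP x_ne_y.
by have [_ /(_ y y_w (nesym x_ne_y))] := tau_unamb x_w.
Qed.

Lemma serial_by_zero u k : u < size tau -> data (at_ tau u) = 0 ->
  inLw tau (loc (at_ tau u)) k -> r u < r k.
Proof.
have [_ _ tau_ser] := r_sched; move=> u_lt du0 k_w.
case: (tau_ser u u_lt) => [[after _] | [k0 [k0_w _ _ dk0]]]; first exact: after.
by have [] := tau_unamb k0_w; rewrite -dk0.
Qed.

Lemma serial_by_writer u k : u < size tau -> inLw tau (loc (at_ tau u)) k ->
  data (at_ tau u) = data (at_ tau k) ->
  r k <= r u /\ forall k', inLw tau (loc (at_ tau u)) k' -> ~~ (r k < r k' <= r u).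
Proof.
have [_ _ tau_ser] := r_sched; move=> u_lt k_w duk.
case: (tau_ser u u_lt) => [[_ du0] | [k0 [k0_w k0_le k0_last dk0]]].
  by have [] := tau_unamb k_w; rewrite -duk.
by have -> : k = k0 by apply: unambiguous_write_eq k_w k0_w _; rewrite -duk.
Qed.

Lemma Omega_e_increasing (Omega : seq event -> nat -> nat -> nat -> Prop) j x y :
  (forall a b, Omega tau j a b -> r a < r b) -> Omega_e Omega tau j x y -> r x < r y.
Proof.
have [r_inj _ tau_ser] := r_sched.
move=> Omega_r [[x_lt xj] [[y_lt yj] edge]].
case: edge => [[dxy [xW yR]] | [[dx0 dy] | [a [b [a_w [b_w [ab [dax dby]]]]]]]].
- have x_w : inLw tau (loc (at_ tau y)) x by rewrite yj.
  have [xy _] := serial_by_writer y_lt x_w (esym dxy).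
  case: ltngtP xy => // /(r_inj _ _ x_lt y_lt) exy _.
  by rewrite exy yR in xW.
- case: (tau_ser y y_lt) => [[_ dy0] | [k [k_w k_le _ _]]]; first by case: (dy dy0).
  by apply: leq_trans k_le; apply: serial_by_zero x_lt dx0 _; rewrite xj -yj.
- have a_x : inLw tau (loc (at_ tau x)) a by rewrite xj.
  have b_y : inLw tau (loc (at_ tau y)) b by rewrite yj.
  have [_ a_last] := serial_by_writer x_lt a_x (esym dax).
  have [b_le _] := serial_by_writer y_lt b_y (esym dby).
  have xb : r x < r b.
    have b_x : inLw tau (loc (at_ tau x)) b by rewrite xj.
    by have := a_last b b_x; rewrite Omega_r //= -ltnNge.
  exact: leq_trans xb b_le.
Qed.

Lemma G_edge_increasing n m (Omega : seq event -> nat -> nat -> nat -> Prop) x y :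
  (forall j a b, Omega tau j a b -> r a < r b) -> G_edge n m Omega tau x y -> r x < r y.
Proof.
have [_ r_po _] := r_sched; move=> Omega_r.
case=> [[i [_ [[x_lt xi] [[y_lt yi] xy]]]] | [j [_ e]]].
  by apply: r_po; rewrite ?xi ?yi.
exact: Omega_e_increasing (Omega_r j) e.
Qed.

End UnambiguousSchedule.

Section ScheduleFromGraph.

Variables (n m v : nat) (Omega : seq event -> nat -> nat -> nat -> Prop).
Variables (tau : seq event) (r : nat -> nat).
Hypotheses (tau_inE : forall u, u < size tau -> Defs.inE n m v (at_ tau u))
           (tau_unamb : unambiguous tau).
Hypothesis tau_causal : forall j x, inLr tau j x ->
  data (at_ tau x) = 0 \/ exists y, inLw tau j y /\ data (at_ tau x) = data (at_ tau y).
Hypothesis Omega_total :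
  forall j, 1 <= j <= m -> strict_total_order_on (inLw tau j) (Omega tau j).
Hypothesis r_G : forall x y, G_edge n m Omega tau x y -> r x < r y.

Lemma program_order_of_G_increasing u w :
  u < w -> w < size tau -> proc (at_ tau u) = proc (at_ tau w) -> r u < r w.
Proof.
move=> uw w_lt puw; have u_lt := ltn_trans uw w_lt.
have [p_range _] := tau_inE u_lt.
by apply: r_G; left; exists (proc (at_ tau u)).
Qed.

Lemma serial_by_of_G_increasing : serial_by tau r.
Proof.
move=> u u_lt; set j := loc (at_ tau u); have [_ [j_range _]] := tau_inE u_lt.
have G_loc x y : Omega_e Omega tau j x y -> r x < r y.
  by move=> e; apply: r_G; right; exists j.
have u_j : inL tau j u by [].
case: (eqVneq (data (at_ tau u)) 0) => [du0 | du_ne0].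
  left; split=> // k k_w; apply: G_loc; split=> //; split; first by case: k_w.
  by right; left; split=> //; case: (tau_unamb k_w).
case u_op : (op (at_ tau u)); last first.
  by right; exists u; split=> // k' _; lia.
have [du0 | [y [y_w duy]]] := tau_causal (conj u_j u_op); first by rewrite du0 in du_ne0.
have yu : r y < r u.
  have [y_j yW] := y_w.
  by apply: G_loc; split=> //; split=> //; left.
right; exists y; split=> //; first exact: ltnW.
move=> k k_w; apply/negP => /andP [yk ku].
have [_ [_ [_ Omega_tot]]] := Omega_total j_range.
have y_ne_k : y <> k by move=> eyk; rewrite eyk ltnn in yk.
(* Totality of Omega yields a constraint edge u -> k or k -> y. *)
case: (Omega_tot y k y_w k_w y_ne_k) => [Oyk | Oky].
  have : r u < r k.
    apply: G_loc; split=> //; split; first by case: k_w.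
    by right; right; exists y, k.
  by rewrite ltnNge ku.
have : r k < r y.
  apply: G_loc; split; first by case: k_w.
  split; first by case: y_w.
  by right; right; exists k, y.
by rewrite ltnNge (ltnW yk).
Qed.

End ScheduleFromGraph.

Lemma G_edge_dom n m Omega tau x y :
  G_edge n m Omega tau x y -> x < size tau /\ y < size tau.
Proof. by case=> [[i [_ [[? _] [[? _] _]]]] | [j [_ [[? _] [[? _] _]]]]]. Qed.

Lemma In_nth (s : seq event) u : u < size s -> List.In (at_ s u) s.
Proof. by elim: s u => // e s IH [|u] /= u_lt; [left | right; apply: IH]. Qed.

Lemma In_trace_of_run (I : Type) (w : seq (letter I)) e :
  List.In e (trace_of_run w) -> List.In (Defs.Mem e) w.
Proof.
elim: w => //= l w IH; rewrite /trace_of_run /=.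
by case: l => [e' | a] /=; [case=> [-> | /IH] | move/IH]; auto.
Qed.

Section Traces.

Variables (I : Type) (S : nat -> nat -> nat -> seq (letter I) -> Prop).
Hypothesis S_regular : memory_system S.

Lemma trace_event_inE n m v tau : 1 <= n -> 1 <= m -> 1 <= v ->
  trace_nmv S n m v tau -> forall e, List.In e tau -> Defs.inE n m v e.
Proof.
move=> n_ge1 m_ge1 v_ge1 [w [Sw ->]] e e_in.
have [A [Q [q0 [delta [F S_dfa]]]]] := S_regular n_ge1 m_ge1 v_ge1.
have [w_letters _] := (S_dfa w).1 Sw.
exact: w_letters (Defs.Mem e) (In_trace_of_run e_in).
Qed.

Lemma sc_schedule_of_acyclic (Omega : seq event -> nat -> nat -> nat -> Prop) n m tau :
  causality S -> 1 <= n -> 1 <= m -> witness S n m Omega ->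
  trace_nm S n m tau -> unambiguous tau -> acyclic (G_edge n m Omega tau) ->
  exists r, sc_schedule tau r.
Proof.
move=> S_causal n_ge1 m_ge1 Omega_w tau_S tau_unamb G_acyc.
have [v [v_ge1 tau_Sv]] := tau_S.
have tau_inE u : u < size tau -> Defs.inE n m v (at_ tau u).
  by move=> u_lt; apply: trace_event_inE tau_Sv _ (In_nth u_lt).
have [r [r_inj r_G]] := acyclic_topological_rank (@G_edge_dom n m Omega tau) G_acyc.
exists r; split=> //.
  exact: program_order_of_G_increasing tau_inE r_G.
apply: serial_by_of_G_increasing tau_inE tau_unamb _ _ r_G.
  exact: S_causal tau_Sv.
exact: Omega_w tau_S.
Qed.

End Traces.

Definition write_order (sched : seq event -> nat -> nat) (tau : seq event) (j a b : nat)
  : Prop :=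
  [/\ inLw tau j a, inLw tau j b & sched tau a < sched tau b].

Lemma write_order_total sched tau j :
  (forall x y, x < size tau -> y < size tau -> sched tau x = sched tau y -> x = y) ->
  strict_total_order_on (inLw tau j) (write_order sched tau j).
Proof.
move=> sched_inj; split; first by move=> x y [].
split; first by move=> x [_ _]; rewrite ltnn.
split; first by move=> x y z [x_w _ xy] [_ z_w yz]; split=> //; apply: ltn_trans yz.
move=> x y x_w y_w x_ne_y.
case: (ltngtP (sched tau x) (sched tau y)) => [xy | yx | exy]; [by left | by right |].
by case: x_ne_y; apply: (sched_inj _ _ (inLw_lt x_w) (inLw_lt y_w) exy).
Qed.

Theorem corollary5p4 (I : Type) (S : nat -> nat -> nat -> seq (letter I) -> Prop) :
  memory_system S -> causality S -> data_independence S ->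
  forall n m : nat, 1 <= n -> 1 <= m ->
    ((forall tau, trace_nm S n m tau -> seq_consistent tau) <->
     exists Omega : seq event -> nat -> nat -> nat -> Prop,
       witness S n m Omega /\
       forall tau, trace_nm S n m tau -> unambiguous tau ->
         acyclic (G_edge n m Omega tau)).
Proof.
move=> S_regular S_causal S_data_indep n m n_ge1 m_ge1; split.
  move=> S_sc; pose sched tau := epsilon (inhabits id) (sc_schedule tau).
  have sched_ok tau : trace_nm S n m tau -> sc_schedule tau (sched tau).
    by move=> tau_S; apply: epsilon_spec; apply/seq_consistentP/S_sc.
  exists (write_order sched); split.
    move=> tau tau_S j _; have [sched_inj _ _] := sched_ok _ tau_S.
    exact: write_order_total.
  move=> tau tau_S tau_unamb; apply: (acyclic_of_rank (r := sched tau)) => x y.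
  by apply: (G_edge_increasing tau_unamb (sched_ok _ tau_S)) => j a b [].
move=> [Omega [Omega_w G_acyc]] tau [v [v_ge1 tau_Sv]].
have tau_inE := trace_event_inE S_regular n_ge1 m_ge1 v_ge1 tau_Sv.
have [tau' [lam [tau'_S [tau'_unamb [[lam0 _] ->]]]]] :=
  (S_data_indep n m v n_ge1 m_ge1 v_ge1 tau tau_inE).1 tau_Sv.
have [r r_sched] := sc_schedule_of_acyclic S_regular S_causal n_ge1 m_ge1 Omega_w
  tau'_S tau'_unamb (G_acyc _ tau'_S tau'_unamb).
by apply/seq_consistentP; exists r; apply: sc_schedule_rename r_sched.
Qed.
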